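(* Let $t$ be an indeterminate, let $\mathbf K$ be an infinite subset of $\mathbb C\setminus\{0,1\}$, and let $\mathbb F$ be a subring of $\mathbb C(t)$ with $$\mathbb C[t,t^{-1}]\subseteq \mathbb F\subseteq\{f/g : f,g\in\mathbb C[t],\ g(1)\neq 0,\ g(\lambda)\neq0\ \forall \lambda\in\mathbf K\}.$$ Let $A$ be the $\mathbb F$-algebra generated by $x_1,\dots,x_n$ subject to finitely many relations, each an $\mathbb F$-linear combination of monomials in the $x_j$. Assume $t-1$ is a nonzero, nonunit, non-zero-divisor of $A$ and that $A_1:=A/(t-1)A$ is commutative; let $\gamma_1:A\to A_1$ be the canonical map, and regard $A_1$ as a Poisson algebra with bracket $\{\gamma_1(a),\gamma_1(b)\}=\gamma_1((t-1)^{-1}(ab-ba))$. For $\lambda\in\mathbf K$ let $A_\lambda$ be the $\mathbb C$-algebra generated by $x_1,\dots,x_n$ subject to the same relations with all coefficients evaluated at $t=\lambda$, and let $\gamma_\lambda:A\to A_\lambda$ be the $\mathbb C$-algebra map with $t\mapsto\lambda$, $x_j\mapsto x_j$. Let $\widehat A=\prod_{\lambda\in\mathbf K}A_\lambda$ and $\gamma:A\to\widehat A$, $\gamma(a)=(\gamma_\lambda(a))_{\lambda}$. Assume there is an $\mathbb F$-basis $\{\xi_i\}$ of $A$ whose images under $\gamma_1$ and under each $\gamma_\lambda$ ($\lambda\in\mathbf K$) are $\mathbb C$-bases of $A_1$ and $A_\lambda$ respectively. Then $\gamma$ is injective, and with $\Gamma=\gamma_1\gamma^{-1}:\gamma(A)\to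 A_1$, for every ideal $I$ of $\widehat A$ the set $\Gamma(I\cap\gamma(A))$ is a Poisson ideal of $A_1$.
   Context: A Poisson algebra is a commutative $\mathbb C$-algebra with a Lie bracket $\{-,-\}$ satisfying $\{ab,c\}=a\{b,c\}+\{a,c\}b$. An ideal $J$ of a Poisson algebra is a Poisson ideal if $\{J,A_1\}\subseteq J$. The injectivity of $\gamma$ (needed to define $\Gamma$) is established in the paper separately. *)

From HB Require Import structures.
From mathcomp Require Import all_boot all_order all_algebra.
From mathcomp Require Import complex Rstruct fraction.
From Stdlib Require Import ClassicalEpsilon.

Set Implicit Arguments. Unset Strict Implicit. Unset Printing Implicit Defensive.
Import Order.TTheory GRing.Theory Num.Theory.
Local Open Scope ring_scope.

Definition CC : numClosedFieldType := complex Rdefinitions.R.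

Definition Ct := {fraction {poly CC}}.
Definition toCt (p : {poly CC}) : Ct := @FracField.tofrac _ p.
Definition tt_ : Ct := toCt 'X.

(* Value of a rational function at l: p(l)/q(l) for any representation
   f = p/q with q(l) != 0 (this value does not depend on the representation);
   0 (junk) if no such representation exists. *)
Definition fev (l : CC) (f : Ct) : CC :=
  epsilon (inhabits 0) (fun c : CC => exists p q : {poly CC},
      f = toCt p / toCt q /\ q.[l] != 0 /\ c = p.[l] / q.[l]).

Inductive term (R : Type) (n : nat) : Type :=
| tVar of 'I_n
| tCst of R
| tAdd of term R n & term R n
| tMul of term R n & term R n
| tOpp of term R n.
Arguments tVar {R n}. Arguments tCst {R n}.
Arguments tAdd {R n}. Arguments tMul {R n}. Arguments tOpp {R n}.

Fixpoint tmap (R S : Type) (n : nat) (f : R -> S) (x : term R n) : term S n :=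
  match x with
  | tVar i => tVar i
  | tCst c => tCst (f c)
  | tAdd a b => tAdd (tmap f a) (tmap f b)
  | tMul a b => tMul (tmap f a) (tmap f b)
  | tOpp a => tOpp (tmap f a)
  end.

Fixpoint wf (R : Type) (n : nat) (P : R -> Prop) (x : term R n) : Prop :=
  match x with
  | tVar _ => True
  | tCst c => P c
  | tAdd a b => wf P a /\ wf P b
  | tMul a b => wf P a /\ wf P b
  | tOpp a => wf P a
  end.

Definition monom (R : comNzRingType) (n : nat) (w : seq 'I_n) : term R n :=
  foldr (fun i acc => tMul (tVar i) acc) (tCst 1) w.

(* A relation is a linear combination  sum_j c_j * (monomial w_j),
   given as the list of pairs (c_j, w_j). *)
Definition lincomb (R : comNzRingType) (n : nat) (r : seq (R * seq 'I_n)) : term R n :=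
  foldr (fun cw acc => tAdd (tMul (tCst cw.1) (@monom R n cw.2)) acc) (tCst 0) r.

(* Congruence defining the algebra over the commutative ring (sub)set P of R
   generated by x_0..x_{n-1} subject to the relations rels:
   two expressions are equal in the presented algebra iff related by [cong]. *)
Inductive cong (R : comNzRingType) (n : nat) (P : R -> Prop)
    (rels : seq (seq (R * seq 'I_n))) : term R n -> term R n -> Prop :=
| c_refl x : cong P rels x x
| c_sym x y : cong P rels x y -> cong P rels y x
| c_trans x y z : cong P rels x y -> cong P rels y z -> cong P rels x z
| c_add x x' y y' : cong P rels x x' -> cong P rels y y' ->
    cong P rels (tAdd x y) (tAdd x' y')
| c_mul x x' y y' : cong P rels x x' -> cong P rels y y' ->
    cong P rels (tMul x y) (tMul x' y')
| c_opp x x' : cong P rels x x' -> cong P rels (tOpp x) (tOpp x')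
| c_addA x y z : cong P rels (tAdd x (tAdd y z)) (tAdd (tAdd x y) z)
| c_addC x y : cong P rels (tAdd x y) (tAdd y x)
| c_add0 x : cong P rels (tAdd x (tCst 0)) x
| c_addN x : cong P rels (tAdd x (tOpp x)) (tCst 0)
| c_mulA x y z : cong P rels (tMul x (tMul y z)) (tMul (tMul x y) z)
| c_mul1l x : cong P rels (tMul (tCst 1) x) x
| c_mul1r x : cong P rels (tMul x (tCst 1)) x
| c_mulDl x y z : cong P rels (tMul (tAdd x y) z) (tAdd (tMul x z) (tMul y z))
| c_mulDr x y z : cong P rels (tMul x (tAdd y z)) (tAdd (tMul x y) (tMul x z))
| c_cstD a b : P a -> P b -> cong P rels (tCst (a + b)) (tAdd (tCst a) (tCst b))
| c_cstM a b : P a -> P b -> cong P rels (tCst (a * b)) (tMul (tCst a) (tCst b))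
| c_cstC a x : P a -> cong P rels (tMul (tCst a) x) (tMul x (tCst a))
| c_rel r : List.In r rels -> cong P rels (lincomb r) (tCst 0).

Definition tSub (R : Type) (n : nat) (x y : term R n) := tAdd x (tOpp y).

Definition tsum (R : comNzRingType) (n : nat) (I : Type) (s : seq I)
    (c : I -> R) (e : I -> term R n) : term R n :=
  foldr (fun i acc => tAdd (tMul (tCst (c i)) (e i)) acc) (tCst 0) s.

(* e is a basis over the scalars {c | S c} of the algebra whose elements are
   the expressions satisfying [dom] and whose equality is [eqv]. *)
Definition is_basis (R : comNzRingType) (n : nat) (I : eqType)
    (S : R -> Prop) (dom : term R n -> Prop) (eqv : term R n -> term R n -> Prop)
    (e : I -> term R n) : Prop :=
  (forall a, dom a -> exists (s : seq I) (c : I -> R),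
       uniq s /\ (forall i, S (c i)) /\ eqv a (tsum s c e)) /\
  (forall (s : seq I) (c : I -> R), uniq s -> (forall i, S (c i)) ->
       eqv (tsum s c e) (tCst 0) -> forall i, i \in s -> c i = 0).

Definition subring_of_Ct (F : Ct -> Prop) : Prop :=
  F 1 /\ (forall a b, F a -> F b -> F (a - b)) /\ (forall a b, F a -> F b -> F (a * b)).

Definition contains_laurent (F : Ct -> Prop) : Prop :=
  forall (p : {poly CC}) (k : nat), F (toCt p / tt_ ^+ k).

Definition within_local (K : CC -> Prop) (F : Ct -> Prop) : Prop :=
  forall f, F f -> exists p q : {poly CC},
    f = toCt p / toCt q /\ q.[1] != 0 /\ (forall l, K l -> q.[l] != 0).

Definition congA (n : nat) (F : Ct -> Prop) (rels : seq (seq (Ct * seq 'I_n))) :=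
  @cong Ct n F rels.

Definition relsAt (n : nat) (l : CC) (rels : seq (seq (Ct * seq 'I_n)))
  : seq (seq (CC * seq 'I_n)) :=
  map (map (fun cw => (fev l cw.1, cw.2))) rels.

Definition congAt (n : nat) (l : CC) (rels : seq (seq (Ct * seq 'I_n))) :=
  @cong CC n (fun _ => True) (relsAt l rels).

Definition gam (n : nat) (l : CC) (a : term Ct n) : term CC n := tmap (fev l) a.

(* Equality in A_1 := A / (t-1)A  (gamma_1 is the identity on expressions). *)
Definition cong1 (n : nat) (F : Ct -> Prop) (rels : seq (seq (Ct * seq 'I_n)))
    (a b : term Ct n) : Prop :=
  exists d, wf F d /\ congA F rels (tSub a b) (tMul (tCst (tt_ - 1)) d).

Definition Kt (K : CC -> Prop) := {l : CC | K l}.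

(* I is a (two-sided) ideal of  Ahat = prod_{l in K} A_l ; elements of Ahat
   are families u : Kt K -> term CC n, equal iff equal in each A_l. *)
Definition is_hat_ideal (n : nat) (K : CC -> Prop) (rels : seq (seq (Ct * seq 'I_n)))
    (I : (Kt K -> term CC n) -> Prop) : Prop :=
  (forall u v, (forall k, congAt (sval k) rels (u k) (v k)) -> I u -> I v) /\
  I (fun _ => tCst 0) /\
  (forall u v, I u -> I v -> I (fun k => tAdd (u k) (v k))) /\
  (forall u v, I v -> I (fun k => tMul (u k) (v k))) /\
  (forall u v, I u -> I (fun k => tMul (u k) (v k))).

Definition gamma (n : nat) (K : CC -> Prop) (a : term Ct n) : Kt K -> term CC n :=
  fun k => gam (sval k) a.

(* Gamma(I ∩ gamma(A)) = { gamma_1(b) : b in A, gamma(b) in I } ⊆ A_1 *)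
Definition Gamma_img (n : nat) (K : CC -> Prop) (F : Ct -> Prop)
    (rels : seq (seq (Ct * seq 'I_n))) (I : (Kt K -> term CC n) -> Prop)
    (a : term Ct n) : Prop :=
  wf F a /\ exists b, wf F b /\ I (@gamma n K b) /\ cong1 F rels a b.

(* J is a Poisson ideal of the Poisson algebra A_1, whose bracket is
   {gamma_1 a, gamma_1 b} = gamma_1 d  where  (t-1) d = ab - ba in A. *)
Definition is_poisson_ideal (n : nat) (F : Ct -> Prop) (rels : seq (seq (Ct * seq 'I_n)))
    (J : term Ct n -> Prop) : Prop :=
  (forall a, J a -> wf F a) /\
  (forall a b, wf F b -> J a -> cong1 F rels a b -> J b) /\
  J (tCst 0) /\
  (forall a b, J a -> J b -> J (tAdd a b)) /\
  (forall a b, wf F a -> J b -> J (tMul a b)) /\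
  (forall a b, wf F b -> J a -> J (tMul a b)) /\
  (forall a b d, wf F a -> wf F b -> wf F d -> J a ->
     congA F rels (tSub (tMul a b) (tMul b a)) (tMul (tCst (tt_ - 1)) d) -> J d).

From HB Require Import structures.
From mathcomp Require Import all_boot all_order all_algebra.
From mathcomp Require Import complex Rstruct fraction.
From mathcomp Require Import boolp.
From Stdlib Require Import ClassicalEpsilon.
Set Implicit Arguments. Unset Strict Implicit. Unset Printing Implicit Defensive.
Import Order.TTheory GRing.Theory Num.Theory.
Local Open Scope ring_scope.

(* Injectivity of gamma: expand a - b in the F-basis xi.  Evaluating at l in K
   turns this into an expansion in the C-basis gam l xi, so each coefficient, a
   rational function regular on K, vanishes on the infinite set K and is 0.

   Poisson ideal: let gamma b lie in I, a - b = (t-1) e and ac - ca = (t-1) d.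
   As A_1 is commutative, ec - ce = (t-1) f, and then bc - cb = (t-1)(d - (t-1) f).
   Evaluating at l <> 1 gives gamma (d - (t-1) f) = (l-1)^-1 [gamma b, gamma c],
   which lies in I, while d - (t-1) f is congruent to d modulo t - 1.  The ideal
   properties of Gamma(I ∩ gamma(A)) hold because t - 1 is central. *)

Section PresentedRing.
Variables (R : comNzRingType) (n : nat) (P : R -> Prop) (rels : seq (seq (R * seq 'I_n))).
Local Notation term := (term R n).
Local Notation cong := (cong P rels).

Record presented := Presented {
  class_of : term -> Prop;
  class_ofP : exists x, class_of = cong x }.

HB.instance Definition _ := gen_eqMixin presented.
HB.instance Definition _ := gen_choiceMixin presented.

Definition cls (x : term) : presented := @Presented (cong x) (ex_intro _ x erefl).

Lemma cls_eq x y : cls x = cls y <-> cong x y.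
Proof.
split => [e | xy].
  have -> : cong x = cong y by exact: (congr1 class_of e).
  exact: c_refl.
have e : cong x = cong y.
  by apply: funext => z; apply: propext; split; [apply: c_trans (c_sym xy) | apply: c_trans xy].
rewrite /cls; move: (ex_intro _ x _) (ex_intro _ y _); rewrite e => p q.
by rewrite (Prop_irrelevance p q).
Qed.

Definition cls_repr (q : presented) : term := sval (cid (class_ofP q)).

Lemma cls_reprK q : cls (cls_repr q) = q.
Proof.
rewrite /cls_repr; case: cid => x /= e; case: q e => S pS /= e.
by rewrite /cls; move: (ex_intro _ _ _) pS; rewrite -e => p q; rewrite (Prop_irrelevance p q).
Qed.

Lemma cls_ind (Q : presented -> Prop) : (forall x, Q (cls x)) -> forall q, Q q.
Proof. by move=> h q; rewrite -(cls_reprK q). Qed.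

Lemma cls_reprE x : cong (cls_repr (cls x)) x.
Proof. by apply/cls_eq; rewrite cls_reprK. Qed.

Definition pres_add p q := cls (tAdd (cls_repr p) (cls_repr q)).
Definition pres_mul p q := cls (tMul (cls_repr p) (cls_repr q)).
Definition pres_opp p := cls (tOpp (cls_repr p)).

Lemma pres_addE x y : pres_add (cls x) (cls y) = cls (tAdd x y).
Proof. by apply/cls_eq; apply: c_add; apply: cls_reprE. Qed.
Lemma pres_mulE x y : pres_mul (cls x) (cls y) = cls (tMul x y).
Proof. by apply/cls_eq; apply: c_mul; apply: cls_reprE. Qed.
Lemma pres_oppE x : pres_opp (cls x) = cls (tOpp x).
Proof. by apply/cls_eq; apply: c_opp; apply: cls_reprE. Qed.

Lemma pres_addA : associative pres_add.
Proof.
move=> a b c; elim/cls_ind: a => x; elim/cls_ind: b => y; elim/cls_ind: c => z.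
by rewrite !pres_addE; apply/cls_eq/c_addA.
Qed.

Lemma pres_addC : commutative pres_add.
Proof.
move=> a b; elim/cls_ind: a => x; elim/cls_ind: b => y.
by rewrite !pres_addE; apply/cls_eq/c_addC.
Qed.

Lemma pres_add0 : left_id (cls (tCst 0)) pres_add.
Proof.
elim/cls_ind => x; rewrite pres_addE; apply/cls_eq.
by apply: c_trans; [apply: c_addC | apply: c_add0].
Qed.

Lemma pres_addN : left_inverse (cls (tCst 0)) pres_opp pres_add.
Proof.
elim/cls_ind => x; rewrite pres_oppE pres_addE; apply/cls_eq.
by apply: c_trans; [apply: c_addC | apply: c_addN].
Qed.

HB.instance Definition _ :=
  GRing.isZmodule.Build presented pres_addA pres_addC pres_add0 pres_addN.

Lemma pres_mulA : associative pres_mul.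
Proof.
move=> a b c; elim/cls_ind: a => x; elim/cls_ind: b => y; elim/cls_ind: c => z.
by rewrite !pres_mulE; apply/cls_eq/c_mulA.
Qed.

Lemma pres_mul1l : left_id (cls (tCst 1)) pres_mul.
Proof. by elim/cls_ind => x; rewrite pres_mulE; apply/cls_eq/c_mul1l. Qed.

Lemma pres_mul1r : right_id (cls (tCst 1)) pres_mul.
Proof. by elim/cls_ind => x; rewrite pres_mulE; apply/cls_eq/c_mul1r. Qed.

Lemma pres_mulDl : left_distributive pres_mul pres_add.
Proof.
move=> a b c; elim/cls_ind: a => x; elim/cls_ind: b => y; elim/cls_ind: c => z.
by rewrite !(pres_addE, pres_mulE); apply/cls_eq/c_mulDl.
Qed.

Lemma pres_mulDr : right_distributive pres_mul pres_add.
Proof.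
move=> a b c; elim/cls_ind: a => x; elim/cls_ind: b => y; elim/cls_ind: c => z.
by rewrite !(pres_addE, pres_mulE); apply/cls_eq/c_mulDr.
Qed.

HB.instance Definition _ := GRing.Zmodule_isPzRing.Build presented
  pres_mulA pres_mul1l pres_mul1r pres_mulDl pres_mulDr.

Lemma clsD x y : cls (tAdd x y) = cls x + cls y.
Proof. by rewrite -pres_addE. Qed.

Lemma clsM x y : cls (tMul x y) = cls x * cls y.
Proof. by rewrite -pres_mulE. Qed.

Lemma clsN x : cls (tOpp x) = - cls x.
Proof. by rewrite -pres_oppE. Qed.

Lemma clsB x y : cls (tSub x y) = cls x - cls y.
Proof. by rewrite /tSub clsD clsN. Qed.

Lemma cls0 : cls (tCst 0) = 0.
Proof. by []. Qed.

Lemma cls1 : cls (tCst 1) = 1.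
Proof. by []. Qed.

Lemma clsCD a b : P a -> P b -> cls (tCst (a + b)) = cls (tCst a) + cls (tCst b).
Proof. by move=> Pa Pb; rewrite -clsD; apply/cls_eq/c_cstD. Qed.

Lemma clsCM a b : P a -> P b -> cls (tCst (a * b)) = cls (tCst a) * cls (tCst b).
Proof. by move=> Pa Pb; rewrite -clsM; apply/cls_eq/c_cstM. Qed.

Lemma clsCN a : P a -> P (- a) -> cls (tCst (- a)) = - cls (tCst a).
Proof. by move=> Pa PNa; apply/eqP; rewrite -addr_eq0 -clsCD // addNr. Qed.

Lemma clsC_comm a q : P a -> cls (tCst a) * q = q * cls (tCst a).
Proof. by move=> Pa; elim/cls_ind: q => x; rewrite -!clsM; apply/cls_eq/c_cstC. Qed.

Lemma cls_tsum (I : Type) (s : seq I) (c : I -> R) (e : I -> term) :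
  cls (tsum s c e) = \sum_(i <- s) cls (tCst (c i)) * cls (e i).
Proof. by elim: s => [|i s IH] /=; rewrite ?big_nil // big_cons clsD clsM IH. Qed.

End PresentedRing.

Definition defined_at (l : CC) (f : Ct) :=
  exists p q : {poly CC}, f = toCt p / toCt q /\ q.[l] != 0.

Lemma toCt_neq0 (q : {poly CC}) (l : CC) : q.[l] != 0 -> toCt q != 0.
Proof. by move=> ql; rewrite /toCt tofrac_eq0; apply: contraNneq ql => ->; rewrite horner0. Qed.

Lemma fev_frac (l : CC) (p q : {poly CC}) : q.[l] != 0 -> fev l (toCt p / toCt q) = p.[l] / q.[l].
Proof.
move=> ql; rewrite /fev.
have : exists c : CC, exists p' q' : {poly CC},
    toCt p / toCt q = toCt p' / toCt q' /\ q'.[l] != 0 /\ c = p'.[l] / q'.[l].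
  by exists (p.[l] / q.[l]), p, q.
move=> /(epsilon_spec (inhabits 0)) [p' [q' [e [q'l ->]]]].
move/eqP: e; rewrite (@eqr_div Ct _ _ _ _ (toCt_neq0 ql) (toCt_neq0 q'l)).
rewrite /toCt -!tofracM tofrac_eq => /eqP /(congr1 (horner^~ l)) /=; rewrite !hornerM => e.
by apply/eqP; rewrite eqr_div // e.
Qed.

Lemma fevD l a b : defined_at l a -> defined_at l b -> fev l (a + b) = fev l a + fev l b.
Proof.
move=> [p [q [-> ql]]] [p' [q' [-> q'l]]].
rewrite (addf_div _ _ (toCt_neq0 ql) (toCt_neq0 q'l)) /toCt -!tofracM -tofracD.
by rewrite !fev_frac ?hornerM ?mulf_neq0 // hornerD !hornerM addf_div.
Qed.

Lemma fevM l a b : defined_at l a -> defined_at l b -> fev l (a * b) = fev l a * fev l b.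
Proof.
move=> [p [q [-> ql]]] [p' [q' [-> q'l]]].
by rewrite mulf_div /toCt -!tofracM !fev_frac ?hornerM ?mulf_neq0 // mulf_div.
Qed.

Lemma fev_poly l (p : {poly CC}) : fev l (toCt p) = p.[l].
Proof.
have -> : toCt p = toCt p / toCt 1 by rewrite /toCt tofrac1 divr1.
by rewrite fev_frac ?hornerC ?divr1 // oner_neq0.
Qed.

Lemma fev0 l : fev l 0 = 0.
Proof. by rewrite -(tofrac0 {poly CC}) (fev_poly l 0) horner0. Qed.

Lemma fev1 l : fev l 1 = 1.
Proof. by rewrite -(tofrac1 {poly CC}) (fev_poly l 1) hornerC. Qed.

Lemma fev_tsub1 l : fev l (tt_ - 1) = l - 1.
Proof. by rewrite /tt_ /toCt -tofrac1 -tofracB (fev_poly l ('X - 1)) !hornerE. Qed.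

Section TermMap.
Variables (R S : comNzRingType) (n : nat) (f : R -> S).
Hypotheses (f0 : f 0 = 0) (f1 : f 1 = 1).

Lemma tmap_monom (w : seq 'I_n) : tmap f (monom R w) = monom S w.
Proof. by elim: w => [|i w IH] /=; rewrite ?f1 ?IH. Qed.

Lemma tmap_lincomb (r : seq (R * seq 'I_n)) :
  tmap f (lincomb r) = lincomb (map (fun cw => (f cw.1, cw.2)) r).
Proof. by elim: r => [|[c w] r IH] /=; rewrite ?f0 ?IH ?tmap_monom. Qed.

Lemma tmap_tsum (I : Type) (s : seq I) (c : I -> R) (e : I -> term R n) :
  tmap f (tsum s c e) = tsum s (fun i => f (c i)) (fun i => tmap f (e i)).
Proof. by elim: s => [|i s IH] /=; rewrite ?f0 ?IH. Qed.

Lemma cong_tmap (P : R -> Prop) (P' : S -> Prop) (rels : seq (seq (R * seq 'I_n))) :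
  (forall a b, P a -> P b -> f (a + b) = f a + f b) ->
  (forall a b, P a -> P b -> f (a * b) = f a * f b) ->
  (forall a, P a -> P' (f a)) ->
  forall x y, cong P rels x y ->
    cong P' (map (map (fun cw => (f cw.1, cw.2))) rels) (tmap f x) (tmap f y).
Proof.
move=> fD fM fP x y; elim=> /=; try by constructor.
- by move=> *; apply: c_trans; eauto.
- by move=> *; rewrite f0; apply: c_add0.
- by move=> *; rewrite f0; apply: c_addN.
- by move=> *; rewrite f1; apply: c_mul1l.
- by move=> *; rewrite f1; apply: c_mul1r.
- by move=> a b Pa Pb; rewrite fD //; apply: c_cstD; apply: fP.
- by move=> a b Pa Pb; rewrite fM //; apply: c_cstM; apply: fP.
- by move=> a x' Pa; apply: c_cstC; apply: fP.
- by move=> r rel_r; rewrite tmap_lincomb f0; apply/c_rel/List.in_map.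
Qed.

End TermMap.

Lemma gam_cong n (K : CC -> Prop) (F : Ct -> Prop) (rels : seq (seq (Ct * seq 'I_n))) l :
  within_local K F -> K l ->
  forall x y, congA F rels x y -> congAt l rels (gam l x) (gam l y).
Proof.
move=> F_local Kl; have defF a : F a -> defined_at l a.
  by case/F_local=> p [q [-> [_ qK]]]; exists p, q; split => //; apply: qK.
apply: cong_tmap; [exact: fev0 | exact: fev1 | | | by []].
- by move=> a b /defF Da /defF Db; apply: fevD.
- by move=> a b /defF Da /defF Db; apply: fevM.
Qed.

Lemma uniq_seq_of_infinite (T : eqType) (K : T -> Prop) :
  (forall s : seq T, exists x, K x /\ x \notin s) ->
  forall m, exists s : seq T, [/\ uniq s, size s = m & forall x, x \in s -> K x].
Proof.
move=> K_inf; elim=> [|m [s [s_uniq s_size sK]]]; first by exists [::].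
have [x [Kx x_s]] := K_inf s; exists (x :: s); split=> /=; rewrite ?x_s ?s_size //.
by move=> y; rewrite inE => /predU1P [-> | /sK].
Qed.

Lemma poly_eq0_on_infinite (R : idomainType) (K : R -> Prop) (p : {poly R}) :
  (forall s : seq R, exists x, K x /\ x \notin s) ->
  (forall x, K x -> p.[x] = 0) -> p = 0.
Proof.
move=> K_inf p0; apply/eqP/negPn/negP => p_neq0.
have [s [s_uniq s_size sK]] := uniq_seq_of_infinite K_inf (size p).
have s_roots : all (root p) s by apply/allP => x /sK Kx; apply/rootP/p0.
by have := max_poly_roots p_neq0 s_roots s_uniq; rewrite s_size ltnn.
Qed.

Lemma frac_eq0_on_infinite (K : CC -> Prop) (p q : {poly CC}) :
  (forall s : seq CC, exists l, K l /\ l \notin s) -> (forall l, K l -> q.[l] != 0) ->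
  (forall l, K l -> fev l (toCt p / toCt q) = 0) -> toCt p / toCt q = 0.
Proof.
move=> K_inf qK f0; suff -> : p = 0 by rewrite /toCt tofrac0 mul0r.
apply: (poly_eq0_on_infinite K_inf) => l Kl; move/eqP: (f0 l Kl).
by rewrite fev_frac ?qK // mulf_eq0 invr_eq0 (negbTE (qK l Kl)) orbF => /eqP.
Qed.

Lemma gamma_injective n (K : CC -> Prop) (F : Ct -> Prop)
    (rels : seq (seq (Ct * seq 'I_n))) (I : eqType) (xi : I -> term Ct n) :
  (forall s : seq CC, exists l, K l /\ l \notin s) -> within_local K F ->
  is_basis F (wf F) (congA F rels) xi ->
  (forall l, K l ->
     is_basis (fun _ => True) (fun _ => True) (congAt l rels) (fun i => gam l (xi i))) ->
  forall a b, wf F a -> wf F b ->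
    (forall l, K l -> congAt l rels (gam l a) (gam l b)) -> congA F rels a b.
Proof.
move=> K_inf F_local [xi_span _] xi_free a b wa wb gab.
have [s [c [s_uniq [Fc ab_c]]]] := xi_span (tSub a b) (conj wa wb).
have c0 i : i \in s -> c i = 0.
  move=> si; have [p [q [cE [_ qK]]]] := F_local _ (Fc i).
  rewrite cE; apply: frac_eq0_on_infinite K_inf qK _ => l Kl; rewrite -cE.
  have [_ free] := xi_free l Kl; apply: (free s (fun i => fev l (c i))) => //.
  have := gam_cong F_local Kl ab_c; rewrite /gam tmap_tsum ?fev0 // => gab_c.
  apply: c_trans (c_sym gab_c) _; apply/cls_eq; rewrite /= clsD clsN cls0.
  by apply/eqP; rewrite subr_eq0; apply/eqP/cls_eq/gab.
move/cls_eq: ab_c; rewrite clsB cls_tsum big1_seq => [/eqP|i /andP[_ si]].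
  by rewrite subr_eq0 => /eqP /cls_eq.
by rewrite c0 // cls0 mul0r.
Qed.

Lemma commutator_congr (T : pzRingType) (s a b c d e f : T) :
  s * c = c * s -> a - b = s * e -> e * c - c * e = s * f -> a * c - c * a = s * d ->
  b * c - c * b = s * (d - s * f).
Proof.
move=> cs abE ecE acE; have -> : b = a - s * e by rewrite -abE opprB addrC subrK.
rewrite mulrBl mulrBr -mulrA (mulrA c s e) -cs -mulrA opprD addrACA -opprD.
by rewrite acE -mulrBr ecE mulrBr.
Qed.

Section PoissonIdeal.
Variables (K : CC -> Prop) (F : Ct -> Prop) (n : nat) (rels : seq (seq (Ct * seq 'I_n))).
Hypotheses (F0 : F 0) (F_tsub1 : F (tt_ - 1)).
Local Notation clsA := (cls F rels).
Local Notation tau := (clsA (tCst (tt_ - 1))).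

Lemma cong1P a b : cong1 F rels a b <-> exists2 d, wf F d & clsA a - clsA b = tau * clsA d.
Proof.
split=> [[d [wd /cls_eq]] | [d wd abE]]; first by rewrite clsB clsM; exists d.
by exists d; split => //; apply/cls_eq; rewrite clsB clsM.
Qed.

Lemma cong1_refl a : cong1 F rels a a.
Proof. by apply/cong1P; exists (tCst 0); rewrite ?subrr ?cls0 ?mulr0. Qed.

Lemma cong1_sym a b : cong1 F rels a b -> cong1 F rels b a.
Proof.
by case/cong1P=> d wd abE; apply/cong1P; exists (tOpp d); rewrite // clsN mulrN -abE opprB.
Qed.

Lemma cong1_trans a b c : cong1 F rels a b -> cong1 F rels b c -> cong1 F rels a c.
Proof.
case/cong1P=> d wd abE /cong1P [d' wd' bcE]; apply/cong1P; exists (tAdd d d') => //.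
by rewrite clsD mulrDr -abE -bcE addrA subrK.
Qed.

Lemma cong1_add a b a' b' :
  cong1 F rels a b -> cong1 F rels a' b' -> cong1 F rels (tAdd a a') (tAdd b b').
Proof.
case/cong1P=> d wd abE /cong1P [d' wd' abE']; apply/cong1P; exists (tAdd d d') => //.
by rewrite !clsD mulrDr -abE -abE' opprD addrACA.
Qed.

Lemma cong1_mull a b c : wf F c -> cong1 F rels a b -> cong1 F rels (tMul c a) (tMul c b).
Proof.
move=> wc /cong1P [d wd abE]; apply/cong1P; exists (tMul c d) => //.
by rewrite !clsM -mulrBr abE !mulrA clsC_comm.
Qed.

Lemma cong1_mulr a b c : wf F c -> cong1 F rels a b -> cong1 F rels (tMul a c) (tMul b c).
Proof.
move=> wc /cong1P [d wd abE]; apply/cong1P; exists (tMul d c) => //.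
by rewrite !clsM -mulrBl abE mulrA.
Qed.

Variable Id : (Kt K -> term CC n) -> Prop.
Hypothesis Id_ideal : is_hat_ideal rels Id.
Local Notation Gam := (Gamma_img F rels Id).

Lemma Gamma_img_cong1 a b : wf F b -> Gam a -> cong1 F rels a b -> Gam b.
Proof.
move=> wb [_ [b0 [wb0 [Ib0 ab0]]]] ab; split=> //; exists b0; do !split=> //.
exact: cong1_trans (cong1_sym ab) ab0.
Qed.

Lemma Gamma_img0 : Gam (tCst 0).
Proof.
have [Id_cong [Id0 _]] := Id_ideal.
split=> //; exists (tCst 0); split=> //; split; last exact: cong1_refl.
by apply: (Id_cong _ _ _ Id0) => k; rewrite /gamma /gam /= fev0; apply: c_refl.
Qed.

Lemma Gamma_imgD a a' : Gam a -> Gam a' -> Gam (tAdd a a').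
Proof.
have [_ [_ [IdD _]]] := Id_ideal.
move=> [wa [b [wb [Ib ab]]]] [wa' [b' [wb' [Ib' ab']]]]; split=> //.
by exists (tAdd b b'); do !split => //; [apply: IdD | apply: cong1_add].
Qed.

Lemma Gamma_imgMl a b : wf F a -> Gam b -> Gam (tMul a b).
Proof.
have [_ [_ [_ [IdMl _]]]] := Id_ideal.
move=> wa [wb [b0 [wb0 [Ib0 bb0]]]]; split=> //.
exists (tMul a b0); do !split => //; last exact: cong1_mull.
exact (IdMl (@gamma n K a) (@gamma n K b0) Ib0).
Qed.

Lemma Gamma_imgMr a b : wf F b -> Gam a -> Gam (tMul a b).
Proof.
have [_ [_ [_ [_ IdMr]]]] := Id_ideal.
move=> wb [wa [a0 [wa0 [Ia0 aa0]]]]; split=> //.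
exists (tMul a0 b); do !split => //; last exact: cong1_mulr.
exact (IdMr (@gamma n K a0) (@gamma n K b) Ia0).
Qed.

Hypotheses (K_neq1 : forall l, K l -> l != 1) (F_local : within_local K F).
Hypothesis A1_comm : forall a b, wf F a -> wf F b -> cong1 F rels (tMul a b) (tMul b a).

Lemma Gamma_img_bracket a c d : wf F c -> wf F d -> Gam a ->
  congA F rels (tSub (tMul a c) (tMul c a)) (tMul (tCst (tt_ - 1)) d) -> Gam d.
Proof.
move=> wc wd [_ [b [wb [Ib [e [we abE]]]]]] acE.
have [f [wf ecE]] := A1_comm we wc.
have [Id_cong [_ [IdD [IdMl IdMr]]]] := Id_ideal.
split=> //; exists (tSub d (tMul (tCst (tt_ - 1)) f)); do !split=> //; last first.
  by apply/cong1P; exists f; rewrite // clsB clsM opprB addrC subrK.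
pose mu (k : Kt K) := tCst (sval k - 1)^-1 : term CC n.
apply: (Id_cong (fun k => tMul (mu k) (tAdd (tMul (@gamma n K b k) (@gamma n K c k))
                     (tMul (tCst (-1)) (tMul (@gamma n K c k) (@gamma n K b k)))))); last first.
  exact/IdMl/IdD/IdMl/IdMl/Ib/IdMr/Ib.
move=> [l Kl]; rewrite /mu /gamma /=.
have gamE x y : congA F rels x y ->
    cls (fun _ => True) (relsAt l rels) (gam l x) = cls _ _ (gam l y).
  by move=> /(gam_cong F_local Kl) /cls_eq.
move: (gamE _ _ abE) (gamE _ _ ecE) (gamE _ _ acE); rewrite /gam /=.
rewrite !(clsD, clsN, clsM) fev_tsub1 => abL ecL acL; apply/cls_eq.
rewrite /gam /= !(clsD, clsN, clsM) clsCN // cls1 mulN1r.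
rewrite (commutator_congr (clsC_comm _ _) abL ecL acL) // mulrA -clsCM //.
rewrite mulVf ?cls1 ?mul1r //.
by rewrite subr_eq0 K_neq1.
Qed.

Lemma Gamma_img_poisson_ideal : is_poisson_ideal F rels Gam.
Proof.
split; first by move=> a [].
split; first exact: Gamma_img_cong1.
split; first exact: Gamma_img0.
split; first exact: Gamma_imgD.
split; first exact: Gamma_imgMl.
split; first exact: Gamma_imgMr.
by move=> a c d _; apply: Gamma_img_bracket.
Qed.

End PoissonIdeal.

Theorem theorem1p4
  (K : CC -> Prop) (F : Ct -> Prop) (n : nat)
  (rels : seq (seq (Ct * seq 'I_n)))
  (I : eqType) (xi : I -> term Ct n) :
  (* K is an infinite subset of CC \ {0,1} *)
  (forall l, K l -> l != 0 /\ l != 1) ->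
  (forall s : seq CC, exists l, K l /\ l \notin s) ->
  (* CC[t,t^-1] ⊆ F ⊆ {f/g : g(1) != 0, g(l) != 0 (l in K)}, F a subring *)
  subring_of_Ct F -> contains_laurent F -> within_local K F ->
  (* relations are F-linear combinations of monomials *)
  (forall r, List.In r rels -> forall cw, List.In cw r -> F cw.1) ->
  (* t-1 is nonzero, a nonunit and a non-zero-divisor in A *)
  ~ congA F rels (tCst (tt_ - 1)) (tCst 0) ->
  ~ (exists u, wf F u /\ congA F rels (tMul (tCst (tt_ - 1)) u) (tCst 1)
                     /\ congA F rels (tMul u (tCst (tt_ - 1))) (tCst 1)) ->
  (forall a, wf F a -> congA F rels (tMul (tCst (tt_ - 1)) a) (tCst 0) ->
     congA F rels a (tCst 0)) ->
  (forall a, wf F a -> congA F rels (tMul a (tCst (tt_ - 1))) (tCst 0) ->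
     congA F rels a (tCst 0)) ->
  (* A_1 = A/(t-1)A is commutative *)
  (forall a b, wf F a -> wf F b -> cong1 F rels (tMul a b) (tMul b a)) ->
  (* {xi_i} is an F-basis of A whose images are CC-bases of A_1 and of A_l *)
  (forall i, wf F (xi i)) ->
  is_basis F (wf F) (congA F rels) xi ->
  is_basis (fun c => exists z : CC, c = toCt z%:P) (wf F) (cong1 F rels) xi ->
  (forall l, K l ->
     is_basis (fun _ => True) (fun _ => True) (congAt l rels) (fun i => gam l (xi i))) ->
  (* conclusion: gamma is injective, and Gamma(I ∩ gamma(A)) is a Poisson ideal *)
  (forall a b, wf F a -> wf F b ->
     (forall l, K l -> congAt l rels (gam l a) (gam l b)) -> congA F rels a b) /\
  (forall Id : (Kt K -> term CC n) -> Prop, is_hat_ideal rels Id ->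
     is_poisson_ideal F rels (Gamma_img F rels Id)).
Proof.
move=> K_01 K_inf [F1 [FB _]] F_laurent F_local _ _ _ _ _ A1_comm _ xi_basis _ xi_gam_basis.
have F0 : F 0 by rewrite -(subrr 1); apply: FB.
have F_tsub1 : F (tt_ - 1).
  by apply: FB => //; have := F_laurent 'X 0; rewrite expr0 divr1.
split; first exact: gamma_injective K_inf F_local xi_basis xi_gam_basis.
move=> Id Id_ideal; apply: Gamma_img_poisson_ideal => //.
by move=> l /K_01 [].
Qed.
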